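(* Let $\mathbf{p}=(p^{(1)},\dots,p^{(n)})\in(0,1)^n$ with $\sum_i p^{(i)}=1$, and for distinct $i,j\in[n]$ let $f(C^{(i)},C^{(j)})=p^{(i)}/(p^{(i)}+p^{(j)})$. Let $\mathcal{C}=(c_1,\dots,c_\ell)$ be a cycle of $\ell\ge 3$ pairwise distinct indices in $[n]$. Then the situational curl $$\mathrm{curl}(\mathcal{C})=f(C^{(c_\ell)},C^{(c_1)})+\sum_{i=1}^{\ell-1}f(C^{(c_i)},C^{(c_{i+1})})$$ satisfies $1<\mathrm{curl}(\mathcal{C})<\ell-1$.
   Context: $C^{(1)},\dots,C^{(n)}$ are class labels; $\mathbf{p}$ is the categorical distribution of the label for a fixed input state $u$, and $f$ are the corresponding situational pairwise opinions. *)

From mathcomp Require Import all_boot all_order all_algebra.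
Set Implicit Arguments. Unset Strict Implicit. Unset Printing Implicit Defensive.
Import Order.TTheory GRing.Theory Num.Theory.
Local Open Scope ring_scope.

Definition opinion (R : realFieldType) (n : nat) (p : 'I_n -> R) (i j : 'I_n) : R :=
  p i / (p i + p j).

Definition curl (R : realFieldType) (n : nat) (p : 'I_n -> R) (x0 : 'I_n)
  (c : seq 'I_n) : R :=
  opinion p (last x0 c) (head x0 c)
  + \sum_(i < (size c).-1) opinion p (nth x0 c i) (nth x0 c i.+1).

From mathcomp Require Import all_boot all_order all_algebra.
From mathcomp Require Import zify lra.
Set Implicit Arguments. Unset Strict Implicit. Unset Printing Implicit Defensive.
Import Order.TTheory GRing.Theory Num.Theory.
Local Open Scope ring_scope.

(* Write a_k for the probabilities along the cycle and S for their sum.  Since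
   the cycle has at least three entries, a_k + a_(k+1) < S, so every term
   a_k / (a_k + a_(k+1)) of the curl exceeds a_k / S, and these shares sum
   to 1.  The complementary terms a_(k+1) / (a_k + a_(k+1)) add up to l - curl
   and exceed a_(k+1) / S in the same way, whence l - curl > 1. *)

Section RatioSums.

Variables (R : realFieldType) (I : finType) (a : I -> R).
Hypotheses (a_gt0 : forall i, 0 < a i) (card_gt2 : (2 < #|I|)%N).

Lemma exists_third (u v : I) : exists w, (w != u) && (w != v).
Proof.
apply/existsP; apply: contraLR card_gt2 => /existsPn not_third.
have cover : [set: I] \subset [set u; v].
  by apply/subsetP => w _; move: (not_third w); rewrite !inE negb_and !negbK orbC.
by rewrite -leqNgt -cardsT (leq_trans (subset_leq_card cover)) // cards2 ltnS leq_b1.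
Qed.

Lemma pair_lt_sum (u v : I) : u != v -> a u + a v < \sum_i a i.
Proof.
move=> neq_uv; have [w /andP [neq_wu neq_wv]] := exists_third u v.
rewrite (bigD1 u) //= (bigD1 v) 1?eq_sym //= addrA ltrDl (bigD1 w) /= ?neq_wu ?neq_wv //.
by rewrite ltr_pwDl // sumr_ge0 // => i _; apply: ltW.
Qed.

Lemma sum_gt0 : 0 < \sum_i a i.
Proof.
have [u _] := card_gt0P (ltnW (ltnW card_gt2)).
have [v /andP [neq_vu _]] := exists_third u u.
exact: lt_trans (addr_gt0 (a_gt0 v) (a_gt0 u)) (pair_lt_sum neq_vu).
Qed.

Lemma share_lt_ratio (u v : I) : u != v -> a u / \sum_i a i < a u / (a u + a v).
Proof.
move=> neq_uv; rewrite ltr_pM2l // ltf_pV2 ?posrE ?sum_gt0 ?addr_gt0 //.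
exact: pair_lt_sum.
Qed.

Lemma sum_ratio_gt1 (g h : I -> I) :
  \sum_i a (g i) = \sum_i a i -> (forall i, g i != h i) ->
  1 < \sum_i a (g i) / (a (g i) + a (h i)).
Proof.
move=> sum_g neq_gh.
rewrite -(divff (lt0r_neq0 sum_gt0)) -{1}sum_g mulr_suml.
apply: ltr_sum => [|i _]; last exact: share_lt_ratio.
have [i0 _] := card_gt0P (ltnW (ltnW card_gt2)).
by apply/hasP; exists i0; rewrite ?mem_index_enum.
Qed.

End RatioSums.

Lemma one_sub_divD (R : fieldType) (x y : R) :
  x + y != 0 -> 1 - x / (x + y) = y / (x + y).
Proof. by move=> nz; rewrite -{1}(divff nz) -mulrBl [_ - x]addrC addKr. Qed.

Lemma ordS_neq (l : nat) (i : 'I_l) : (1 < l)%N -> ordS i != i.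
Proof.
move=> l_gt1; rewrite -(inj_eq val_inj) /=.
have [lt_il | ge_il] := ltnP i.+1 l; first by rewrite modn_small //; lia.
have last_i : i.+1 = l by have := ltn_ord i; lia.
by rewrite last_i modnn; lia.
Qed.

Lemma curl_ordS (R : realFieldType) (n : nat) (p : 'I_n -> R) (x0 : 'I_n)
  (c : seq 'I_n) : (0 < size c)%N ->
  curl p x0 c = \sum_(i < size c) opinion p (nth x0 c i) (nth x0 c (ordS i)).
Proof.
rewrite /curl -nth_last -nth0; case: (size c) => [//|m] _ /=.
rewrite big_ord_recr /= addrC modnn; congr (_ + _); apply: eq_bigr => i _.
by rewrite modn_small // ltnS.
Qed.

Theorem lemma1 (R : realFieldType) (n : nat) (p : 'I_n -> R)
  (hp : forall i, 0 < p i < 1) (hsum : \sum_(i < n) p i = 1)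
  (c : seq 'I_n) (x0 : 'I_n) (huniq : uniq c) (hsize : (3 <= size c)%N) :
  1 < curl p x0 c < (size c)%:R - 1.
Proof.
pose a (i : 'I_(size c)) := p (nth x0 c i).
have a_gt0 i : 0 < a i by case/andP: (hp (nth x0 c i)).
have card_gt2 : (2 < #|'I_(size c)|)%N by rewrite card_ord.
have neq_ordS (i : 'I_(size c)) : ordS i != i by apply: ordS_neq; lia.
rewrite curl_ordS; last by lia.
apply/andP; split.
  by apply: (sum_ratio_gt1 a_gt0 card_gt2 (g := id)) => // i; rewrite eq_sym.
have complement : (size c)%:R - \sum_i a i / (a i + a (ordS i))
                  = \sum_i a (ordS i) / (a (ordS i) + a i).
  have -> : (size c)%:R = \sum_(i < size c) 1 :> R by rewrite sumr_const card_ord.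
  rewrite -sumrB; apply: eq_bigr => i _.
  by rewrite one_sub_divD ?lt0r_neq0 ?addr_gt0 // [a i + _]addrC.
suff : 1 < (size c)%:R - \sum_i a i / (a i + a (ordS i)) by lra.
rewrite complement; apply: (sum_ratio_gt1 a_gt0 card_gt2) => //.
by rewrite [RHS](reindex_inj (@ordS_inj _)).
Qed.
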